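(* Let $M_G$ be a mixed graph of order $n$ and write $\det(xI-N(M_G))=x^n+c_1x^{n-1}+\dots+c_{n-1}x+c_n$. Then for each $k$, $$c_k=\sum_{M_{G'}}(-1)^{-k+r(G')+l_{sn}(M_{G'})+l_n(M_{G'})}\cdot 2^{l_p(M_{G'})+l_n(M_{G'})},$$ where the sum runs over all elementary mixed subgraphs $M_{G'}$ of $M_G$ with $k$ vertices, $G'$ is the underlying graph of $M_{G'}$, and $l_p(M_{G'}),l_n(M_{G'}),l_{sn}(M_{G'})$ are the numbers of positive, negative and semi-negative mixed cycles in $M_{G'}$, respectively.
   Context: A mixed graph $M_G$ is obtained from a finite simple graph $G$ by orienting the edges of some subset of $E(G)$. With $\omega=\frac{1+\mathbf{i}\sqrt3}{2}$, $N(M_G)=(n_{st})$ has entry $\omega$ for an arc from $u_s$ to $u_t$, $\bar\omega$ for an arc from $u_t$ to $u_s$, $1$ for an undirected edge, $0$ otherwise. A mixed subgraph keeps the directions of $M_G$. A mixed cycle is a mixed graph whose underlying graph is a cycle; for a mixed cycle $v_1v_2\cdots v_lv_1$ its weight (in that direction) is $n_{12}n_{23}\cdots n_{(l-1)l}n_{l1}$. A mixed cycle is positive if its weight is $1$, negative if $-1$, semi-positive if its weight is in $\{\omega,\bar\omega\}$, semi-negative if in $\{-\omega,-\bar\omega\}$ (these notions do not depend on the direction). An elementary mixed graph is one in which every component is a single edge (directed or not) or a mixed cycle. For a simple graph $H$, $r(H)=|V(H)|-t(H)$ where $t(H)$ is the number of components. *)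

From mathcomp Require Import all_boot all_order all_algebra all_field.
Set Implicit Arguments. Unset Strict Implicit. Unset Printing Implicit Defensive.
Import Order.TTheory GRing.Theory Num.Theory.
Local Open Scope ring_scope.

Definition omega : algC := (1 + 'i * sqrtC 3) / 2.

Section MixedGraph.
Variable n : nat.

(* A mixed graph on vertices 'I_n: underlying simple graph [adj]
   (symmetric, irreflexive) and a set of arcs [arc] (arc u v = arc from u to v),
   each arc lying on an edge, at most one orientation per edge. *)
Definition mixed_graph (adj arc : rel 'I_n) : Prop :=
  [/\ forall u v, adj u v = adj v u,
      forall u, ~~ adj u u,
      forall u v, arc u v -> adj u v &
      forall u v, arc u v -> ~~ arc v u].

Definition Nmat (adj arc : rel 'I_n) : 'M[algC]_n :=
  \matrix_(s, t) (if arc s t then omega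
                  else if arc t s then omega^*
                  else if adj s t then 1 else 0).

Definition edgeset (adj : rel 'I_n) : {set {set 'I_n}} :=
  [set e : {set 'I_n} | [exists u, exists v, adj u v && (e == [set u; v])]].

(* A (mixed) subgraph without isolated vertices is given by its edge set F. *)
Definition fadj (F : {set {set 'I_n}}) : rel 'I_n :=
  fun u v => [set u; v] \in F.

Definition Vset (F : {set {set 'I_n}}) : {set 'I_n} :=
  [set v | [exists u, fadj F u v]].

Definition comps (F : {set {set 'I_n}}) : {set {set 'I_n}} :=
  [set [set w | connect (fadj F) v w] | v in Vset F].

Definition cyc_seq (F : {set {set 'I_n}}) (C : {set 'I_n}) (s : seq 'I_n) : bool :=
  [&& uniq s, (3 <= size s)%N, [set x in s] == C &
      [forall x in C, forall y in C,
         fadj F x y == ((y == next s x) || (x == next s y))]].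

Definition cyc_weight (N : 'M[algC]_n) (s : seq 'I_n) : algC :=
  \prod_(x <- s) N x (next s x).

Definition elementary (F : {set {set 'I_n}}) : bool :=
  [forall C in comps F,
     (#|C| == 2)%N || [exists t : (#|C|).-tuple 'I_n, cyc_seq F C t]].

Definition ncyc (N : 'M[algC]_n) (F : {set {set 'I_n}}) (W : pred algC) : nat :=
  #|[set C in comps F |
      [exists t : (#|C|).-tuple 'I_n, cyc_seq F C t && W (cyc_weight N t)]]|.

Definition l_p N F := ncyc N F (fun w => w == 1).
Definition l_n N F := ncyc N F (fun w => w == -1).
Definition l_sn N F := ncyc N F (fun w => (w == - omega) || (w == - omega^*)).

Definition rk (F : {set {set 'I_n}}) : int := #|Vset F|%:Z - #|comps F|%:Z.

End MixedGraph.

From mathcomp Require Import all_boot all_order all_algebra all_field all_fingroup.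
From mathcomp Require Import zify ring.

(* Expanding det (xI - N) by the Leibniz formula, and using that N has zero
   diagonal, the coefficient of x^(n-k) is a signed sum, over the permutations s
   moving exactly k points, of the products of the N i (s i) over the moved
   points.  Only permutations whose graph {i, s i} lies in G contribute.  Group
   them by this edge set F, an elementary subgraph on k vertices: a permutation
   with edge set F is an independent choice, on every component of F, of the
   transposition of an edge or of one of the two directions around a cycle, and
   its sign is (-1)^(k + t(F)).  An edge contributes N_uv N_vu = 1 and a cycle of
   weight w contributes w + w^*; as w is a power of the primitive sixth root of
   unity omega, w + w^* is 2, -2, 1 or -1 according as the cycle is positive,
   negative, semi-positive or semi-negative. *)
Set Implicit Arguments. Unset Strict Implicit. Unset Printing Implicit Defensive.
Import Order.TTheory GRing.Theory Num.Theory.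
Local Open Scope ring_scope.

Notation moved s := [set i | s i != i].

Lemma char_poly_mx_perm_prod (R : comNzRingType) (n : nat) (A : 'M[R]_n) (s : 'S_n) :
  (forall i, A i i = 0) ->
  (-1) ^+ s * \prod_i char_poly_mx A i (s i) =
  ((-1) ^+ s * \prod_(i in moved s) - A i (s i)) *: 'X^(n - #|moved s|).
Proof.
move=> A0; rewrite (bigID (mem (moved s))) /= mulrA -mul_polyC; congr (_ * _).
  rewrite rmorphM rmorph_prod rmorphXn rmorphN1; congr (_ * _).
  by apply: eq_bigr => i; rewrite inE !mxE eq_sym => /negbTE-> /=; rewrite sub0r rmorphN.
have card_fixed : #|~: moved s| = (n - #|moved s|)%N.
  by have := cardsC (moved s); rewrite card_ord; lia.
rewrite -card_fixed -prodr_const; apply: eq_big => [i|i]; first by rewrite !inE.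
by rewrite inE negbK => /eqP si; rewrite !mxE si eqxx A0 subr0.
Qed.

Lemma coef_char_poly_zero_diag (R : comNzRingType) (n : nat) (A : 'M[R]_n) k :
  (forall i, A i i = 0) -> (k <= n)%N ->
  (char_poly A)`_(n - k) =
  \sum_(s : 'S_n | #|moved s| == k) (-1) ^+ s * (-1) ^+ k * \prod_(i in moved s) A i (s i).
Proof.
move=> A0 kn; rewrite /char_poly /determinant coef_sum.
rewrite (bigID (fun s : 'S_n => #|moved s| == k)) /=.
rewrite [X in _ + X]big1 ?addr0 => [|s /negbTE sk]; last first.
  rewrite char_poly_mx_perm_prod // coefZ coefXn.
  have ms_n : (#|moved s| <= n)%N by rewrite -[X in (_ <= X)%N]card_ord max_card.
  by rewrite eq_sym (eqn_sub2lE ms_n kn) sk mulr0.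
apply: eq_bigr => s /eqP sk.
by rewrite char_poly_mx_perm_prod // coefZ coefXn sk eqxx mulr1 -mulrA prodrN sk.
Qed.

Definition sym_frel (T : eqType) (f : T -> T) : rel T :=
  fun x y => (y == f x) || (x == f y).

Section CycleOrientation.
Variable T : finType.
Implicit Types (s : seq T) (t : T -> T).

Lemma next_next_neq s x : uniq s -> (2 < size s)%N -> x \in s ->
  next s (next s x) != x.
Proof.
move=> us ss xs; case/rot_to: xs => i q e.
have uq : uniq (x :: q) by rewrite -e rot_uniq.
have sq : (2 < size (x :: q))%N by rewrite -e size_rot.
case: q e uq sq => [|a [|b r]] // e uq sq.
move: uq; rewrite /= !inE !negb_or => /andP[/and3P[xa xb _] /andP[/andP[ab _] _]].
have nx : next [:: x, a, b & r] x = a by rewrite next_nth mem_head /= eqxx.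
have na : next [:: x, a, b & r] a = b.
  by rewrite next_nth !inE eqxx orbT /= (negbTE xa) eqxx.
by rewrite -!(next_rot i us) e nx na eq_sym.
Qed.

Lemma sym_frel_prev s : uniq s -> sym_frel (prev s) =2 sym_frel (next s).
Proof.
move=> us x y; have eq_prev z w : (z == prev s w) = (next s z == w).
  by apply/eqP/eqP => [->|<-]; [rewrite next_prev | rewrite prev_next].
by rewrite /sym_frel !eq_prev orbC ![next s _ == _]eq_sym.
Qed.

Lemma cycle_sym_frel_next s t x0 :
    uniq s -> (2 < size s)%N -> injective t -> {in s, forall x, t x \in s} ->
    {in s &, sym_frel t =2 sym_frel (next s)} ->
  x0 \in s -> t x0 = next s x0 -> {in s, forall x, t x = next s x}.
Proof.
move=> us ss ti ts st x0s tx0.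
have step y : y \in s -> t y = next s y -> t (next s y) = next s (next s y).
  move=> ys ty; set z := next s y.
  have zs : z \in s by rewrite mem_next.
  have : sym_frel (next s) z (t z) by rewrite -st ?ts // /sym_frel eqxx.
  case/orP=> [/eqP // | /eqP tz].
  have tzy : t z = y by rewrite -[t z](prev_next us) -tz /z prev_next.
  have := st z (next s z) zs; rewrite mem_next => /(_ zs).
  rewrite /sym_frel tzy eqxx (negbTE (next_next_neq us ss ys)) /= => /eqP tnz.
  have nnz : next s z = y by apply: ti; rewrite -tnz ty.
  by move: (next_next_neq us ss ys); rewrite -/z nnz eqxx.
move=> x xs; have : fconnect (next s) x0 x by rewrite (fconnect_cycle (cycle_next us) x0s).
move/iter_findex <-; elim: (findex _ x0 x) => [|i IH] //=.
by rewrite step //; elim: i {IH} => [|i IH] //=; rewrite mem_next.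
Qed.

Lemma cycle_sym_frel_orientation s t :
    uniq s -> (2 < size s)%N -> injective t -> {in s, forall x, t x \in s} ->
    {in s &, sym_frel t =2 sym_frel (next s)} ->
  {in s, forall x, t x = next s x} \/ {in s, forall x, t x = prev s x}.
Proof.
case: s => [|x0 s'] // us ss ti ts st; set s := x0 :: s' in us ss ts st *.
have x0s : x0 \in s := mem_head x0 s'.
have : sym_frel (next s) x0 (t x0) by rewrite -st ?ts // /sym_frel eqxx.
case/orP=> /eqP tx0.
  by left; apply: cycle_sym_frel_next tx0.
right => x xs; rewrite -next_rev //.
have urs : uniq (rev s) by rewrite rev_uniq.
apply: (cycle_sym_frel_next (x0 := x0)); rewrite ?size_rev ?mem_rev //.
- by move=> y; rewrite !mem_rev; apply: ts.
- move=> y z; rewrite !mem_rev => ys zs.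
  by rewrite st // -(sym_frel_prev us) /sym_frel !next_rev.
by rewrite next_rev //; apply: (canRL (prev_next us)); rewrite -tx0 ?prev_next.
Qed.

End CycleOrientation.

Lemma eq_set2 (T : finType) (x y a b : T) :
  ([set x; y] == [set a; b]) = ((x == a) && (y == b)) || ((x == b) && (y == a)).
Proof.
apply/eqP/idP => [E | /orP[] /andP[/eqP-> /eqP->] //]; last by rewrite setUC.
have : x \in [set a; b] by rewrite -E set21.
have : y \in [set a; b] by rewrite -E set22.
move=> /set2P[] ? /set2P[] ?; subst; rewrite ?eqxx ?orbT //= ?andbT ?orbb.
  by move: (set22 a b); rewrite -E => /set2P[] ->.
by move: (set21 a b); rewrite -E => /set2P[] ->.
Qed.

Section PermEdges.
Variable n : nat.
Implicit Types (s : 'S_n) (x y : 'I_n).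

Definition perm_edges s : {set {set 'I_n}} := [set [set i; s i] | i in moved s].

Lemma fadj_perm_edges s x y : fadj (perm_edges s) x y = (x != y) && sym_frel s x y.
Proof.
apply/imsetP/idP => [[i] | /andP[xy /orP[] /eqP e]]; subst.
- rewrite inE => si /eqP; rewrite eq_set2 /sym_frel.
  by case/orP=> /andP[/eqP-> /eqP->]; rewrite ?eqxx ?orbT andbT // eq_sym.
- by exists x; rewrite // inE eq_sym.
- by exists y; rewrite ?inE // setUC.
Qed.

Lemma Vset_perm_edges s : Vset (perm_edges s) = moved s.
Proof.
apply/setP => v; rewrite !inE; apply/existsP/idP => [[u] | sv].
  rewrite fadj_perm_edges => /andP[uv /orP[] /eqP e]; last by rewrite -e.
  by rewrite e (inj_eq perm_inj) eq_sym -e.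
by exists (s v); rewrite fadj_perm_edges /sym_frel sv eqxx orbT.
Qed.

Lemma connect_perm_edges s : connect (fadj (perm_edges s)) =2 fconnect s.
Proof.
move=> x y; apply/idP/idP; apply: connect_sub => u v.
  rewrite fadj_perm_edges => /andP[_ /orP[] /eqP->]; first exact: fconnect1.
  by rewrite (fconnect_sym perm_inj); apply: fconnect1.
move/eqP <-; have [<-|su] := eqVneq u (s u); first exact: connect0.
by apply: connect1; rewrite fadj_perm_edges su /sym_frel eqxx.
Qed.

Lemma porbit_fconnect s x : porbit s x = [set y | fconnect s x y].
Proof.
apply/setP => y; rewrite inE; apply/porbitP/idP => [[i ->] | sxy].
  by rewrite permX; apply: fconnect_iter.
by exists (findex s x y); rewrite permX iter_findex.
Qed.

Lemma comps_perm_edges s :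
  comps (perm_edges s) = [set [set y | fconnect s x y] | x in moved s].
Proof.
rewrite /comps Vset_perm_edges; apply: eq_imset => x; apply/setP => y.
by rewrite !inE connect_perm_edges.
Qed.

Lemma fconnect_fixed s y z : s y = y -> fconnect s y z -> z = y.
Proof.
move=> sy; rewrite -[fconnect s y z](@in_set _ (fconnect s y)) -porbit_fconnect.
by case/porbitP => i ->; rewrite permX iter_fix.
Qed.

Lemma fconnect_moved s x y : s x != x -> fconnect s x y -> s y != y.
Proof.
move=> sx; rewrite (fconnect_sym perm_inj) => sxy; apply: contra sx => /eqP sy.
by rewrite (fconnect_fixed sy sxy) sy.
Qed.

(* Each fixed point is an orbit of its own; the other orbits are the components. *)
Lemma card_porbits_perm_edges s :
  #|porbits s| = (n - #|moved s| + #|comps (perm_edges s)|)%N.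
Proof.
have -> : porbits s = (porbit s @: moved s) :|: (porbit s @: ~: moved s).
  rewrite -imsetU setUCr; apply/setP => O.
  by apply/imsetP/imsetP => -[x _ ->]; exists x.
rewrite cardsU.
have -> : (porbit s @: moved s) :&: (porbit s @: ~: moved s) = set0.
  apply/setP => O; rewrite !inE; apply/negP => /andP[/imsetP[x xm ->] /imsetP[y ym E]].
  move: xm ym; rewrite !inE negbK => xm /eqP ym.
  have : y \in porbit s x by rewrite E porbit_id.
  rewrite porbit_fconnect inE (fconnect_sym perm_inj) => /(fconnect_fixed ym) yx.
  by move: xm; rewrite yx ym eqxx.
rewrite cards0 subn0 addnC; congr (_ + _)%N.
  rewrite card_in_imset => [|x y]; last first.
    rewrite !inE !negbK => /eqP sx _ E.
    have : y \in porbit s x by rewrite E porbit_id.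
    by rewrite porbit_fconnect inE => /(fconnect_fixed sx).
  by have := cardsC (moved s); rewrite card_ord; lia.
rewrite comps_perm_edges; apply: eq_card => O.
by apply/imsetP/imsetP => -[x xm ->]; exists x; rewrite ?porbit_fconnect.
Qed.

Lemma sign_perm_edges (R : nzRingType) s :
  (-1) ^+ s = (-1) ^+ (#|moved s| + #|comps (perm_edges s)|) :> R.
Proof.
rewrite -signr_odd -[RHS]signr_odd; congr ((-1) ^+ (nat_of_bool _)).
have ms_n : (#|moved s| <= n)%N by rewrite -[X in (_ <= X)%N]card_ord max_card.
rewrite /odd_perm card_ord card_porbits_perm_edges !oddD oddB //.
by case: (odd n); case: (odd #|moved s|); case: (odd #|comps _|).
Qed.

Lemma elementary_perm_edges s : elementary (perm_edges s).
Proof.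
apply/forallP => C; apply/implyP; rewrite comps_perm_edges => /imsetP[x xm ->].
rewrite inE in xm; set C' := [set y | fconnect s x y].
have C'_order : #|C'| = fingraph.order s x by apply: eq_card => y; rewrite inE.
case: eqP => //= C'2; apply/existsP.
have size_orbit : size (fingraph.orbit s x) == #|C'|.
  by rewrite fingraph.size_orbit C'_order.
exists (Tuple size_orbit); rewrite /cyc_seq /=.
have cyc := fingraph.cycle_orbit (@perm_inj _ s) x.
apply/and4P; split.
- exact: fingraph.orbit_uniq.
- rewrite fingraph.size_orbit -C'_order ltn_neqAle eq_sym; apply/andP; split; first exact/eqP.
  have sx_sub : [set x; s x] \subset C'.
    by apply/subsetP => y; rewrite !inE => /orP[] /eqP->; [apply: connect0 | apply: fconnect1].
  by have := subset_leq_card sx_sub; rewrite cards2 eq_sym xm.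
- by apply/eqP/setP => y; rewrite !inE fingraph.fconnect_orbit.
apply/forallP => y; apply/implyP; rewrite inE => xy; apply/forallP => z; apply/implyP.
rewrite inE => xz; rewrite !(nextE cyc) -?fingraph.fconnect_orbit // fadj_perm_edges.
have [<-|//] := eqVneq y z.
by rewrite /sym_frel [y == s y]eq_sym (negbTE (fconnect_moved xm xy)).
Qed.

End PermEdges.

Section Subgraph.
Variable n : nat.
Variable F : {set {set 'I_n}}.
Hypothesis F2 : {in F, forall e : {set 'I_n}, #|e| = 2}.
Implicit Types (C : {set 'I_n}) (f : {ffun 'I_n -> 'I_n}) (x y : 'I_n).

Lemma fadj_sym x y : fadj F x y = fadj F y x.
Proof. by rewrite /fadj setUC. Qed.

Lemma fadj_irr x : ~~ fadj F x x.
Proof. by apply/negP => /F2; rewrite setUid cards1. Qed.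

Lemma connect_sym_fadj : connect_sym (fadj F).
Proof. exact/sym_connect_sym/fadj_sym. Qed.

Definition comp_of x := [set y | connect (fadj F) x y].

Lemma comp_of_id x : x \in comp_of x.
Proof. by rewrite inE connect0. Qed.

Lemma comp_of_eq x y : y \in comp_of x -> comp_of y = comp_of x.
Proof.
by rewrite inE => xy; apply/setP => z; rewrite !inE (same_connect connect_sym_fadj xy).
Qed.

Lemma closed_Vset : closed (fadj F) (Vset F).
Proof.
move=> x y xy; rewrite !inE; apply/existsP/existsP => -[] *; first by exists x.
by exists y; rewrite fadj_sym.
Qed.

Lemma comp_of_Vset x y : x \in Vset F -> y \in comp_of x -> y \in Vset F.
Proof. by move=> xV; rewrite inE => /(closed_connect closed_Vset) <-. Qed.

Lemma comp_of_comps x : x \in Vset F -> comp_of x \in comps F.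
Proof. exact: imset_f. Qed.

Lemma comps_comp_of C x : C \in comps F -> x \in C -> comp_of x = C.
Proof. by case/imsetP => v _ -> /comp_of_eq. Qed.

Lemma comps_Vset C x : C \in comps F -> x \in C -> x \in Vset F.
Proof. by case/imsetP => v vV -> /(comp_of_Vset vV). Qed.

Lemma prod_Vset_comps (R : comNzRingType) (E : 'I_n -> R) :
  \prod_(i in Vset F) E i = \prod_(C in comps F) \prod_(i in C) E i.
Proof.
rewrite (partition_big comp_of (mem (comps F))) => [|i /comp_of_comps //].
apply: eq_bigr => C CF; apply: eq_bigl => i.
apply/andP/idP => [[_ /eqP <-] | iC]; first exact: comp_of_id.
by split; [apply: comps_Vset iC | apply/eqP/comps_comp_of].
Qed.

Definition traverses C f : bool :=
  [&& injectiveb f, [forall x, (x \notin C) ==> (f x == x)] &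
      [forall x in C, forall y in C, fadj F x y == sym_frel f x y]].

Lemma traversesP C f :
  reflect [/\ injective f, forall x, x \notin C -> f x = x &
              {in C &, fadj F =2 sym_frel f}]
          (traverses C f).
Proof.
apply: (iffP and3P) => [[/injectiveP fi /forallP fC /forallP Ff] | [fi fC Ff]].
  split=> // [x xC | x y xC yC]; first exact/eqP/(implyP (fC x)).
  by apply/eqP; move: (Ff x); rewrite xC => /forallP/(_ y); rewrite yC.
split; first exact/injectiveP.
  by apply/forallP => x; apply/implyP => /fC ->.
by apply/forall_inP => x xC; apply/forall_inP => y yC; rewrite Ff.
Qed.

Lemma traverses_in C f x : traverses C f -> x \in C -> (f x \in C) && (f x != x).
Proof.
case/traversesP => fi fC Ff xC.
have fx : f x != x.
  by move: (Ff x x xC xC); rewrite (negbTE (fadj_irr x)) /sym_frel orbb eq_sym => /esym/negbT.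
rewrite fx andbT; apply: contraNT fx => /fC fxC.
by apply/eqP/fi.
Qed.

Lemma traverses_edge u v :
  fadj F u v -> traverses [set u; v] =1 pred1 (pval (tperm u v)).
Proof.
move=> uv; have u_v : u != v by apply: contraTneq uv => ->; apply: fadj_irr.
move=> f; apply/idP/eqP => [fuv | ->].
  have /andP[+ fu] := traverses_in fuv (set21 u v).
  have /andP[+ fv] := traverses_in fuv (set22 u v).
  rewrite !inE (negbTE fu) (negbTE fv) orbF /= => /eqP fv_u /eqP fu_v.
  case/traversesP: fuv => _ fC _; apply/ffunP => x; rewrite pvalE.
  case: tpermP => [-> // | -> // | xu xv]; apply: fC.
  by rewrite !inE negb_or; apply/andP; split; apply/eqP.
apply/traversesP; split => [x y | x | x y]; rewrite ?pvalE.
- exact: perm_inj.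
- by rewrite !inE negb_or => /andP[xu xv]; apply: tpermD; rewrite eq_sym.
rewrite !inE /sym_frel => /orP[] /eqP-> /orP[] /eqP->;
  rewrite ?tpermL ?tpermR ?eqxx ?orbT ?(negbTE (fadj_irr _)) ?(negbTE u_v) //=.
- by rewrite fadj_sym.
by rewrite eq_sym (negbTE u_v).
Qed.

Definition next_ffun (s : seq 'I_n) : {ffun 'I_n -> 'I_n} := [ffun x => next s x].
Definition prev_ffun (s : seq 'I_n) : {ffun 'I_n -> 'I_n} := [ffun x => prev s x].

Lemma next_ffunE s x : next_ffun s x = next s x. Proof. exact: ffunE. Qed.
Lemma prev_ffunE s x : prev_ffun s x = prev s x. Proof. exact: ffunE. Qed.

Lemma cyc_seqP C s : cyc_seq F C s ->
  [/\ uniq s, (2 < size s)%N, C =i s & {in C &, fadj F =2 sym_frel (next s)}].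
Proof.
case/and4P => us ss /eqP sC /forall_inP Ff; split => // [x | x y xC yC].
  by rewrite -sC inE.
by apply/eqP; move: (Ff x xC) => /forall_inP/(_ y yC).
Qed.

Lemma traverses_next C s : cyc_seq F C s -> traverses C (next_ffun s).
Proof.
case/cyc_seqP => us _ sC Ff; apply/traversesP; split => [x y | x | x y xC yC].
- by rewrite !next_ffunE => /(can_inj (prev_next us)).
- by rewrite sC next_ffunE next_nth => /negbTE ->.
by rewrite Ff // /sym_frel !next_ffunE.
Qed.

Lemma traverses_prev C s : cyc_seq F C s -> traverses C (prev_ffun s).
Proof.
case/cyc_seqP => us _ sC Ff; apply/traversesP; split => [x y | x | x y xC yC].
- by rewrite !prev_ffunE => /(can_inj (next_prev us)).
- by rewrite sC prev_ffunE prev_nth => /negbTE ->.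
by rewrite Ff // -sym_frel_prev // /sym_frel !prev_ffunE.
Qed.

Lemma traverses_cyc C s f : cyc_seq F C s -> traverses C f ->
  f = next_ffun s \/ f = prev_ffun s.
Proof.
move=> Cs /[dup] Cf /traversesP[fi fC Ff]; case/cyc_seqP: Cs => us ss sC Fs.
have fs : {in s, forall x, f x \in s}.
  by move=> x; rewrite -!sC => /(traverses_in Cf) /andP[].
have fF : {in s &, sym_frel f =2 sym_frel (next s)}.
  by move=> x y; rewrite -!sC => xC yC; rewrite -Ff // Fs.
have notin_s x : x \notin s -> f x = x by rewrite -sC; apply: fC.
case: (cycle_sym_frel_orientation us ss fi fs fF) => fsE; [left | right];
  apply/ffunP => x; rewrite ?next_ffunE ?prev_ffunE; have [/fsE // | xs] := boolP (x \in s).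
  by rewrite next_nth (negbTE xs) notin_s.
by rewrite prev_nth (negbTE xs) notin_s.
Qed.

Lemma next_ffun_neq_prev C s : cyc_seq F C s -> next_ffun s != prev_ffun s.
Proof.
case/cyc_seqP => us ss _ _; case: s us ss => [|x s'] // us ss.
apply/eqP => /ffunP/(_ x); rewrite next_ffunE prev_ffunE => nx_px.
by move: (next_next_neq us ss (mem_head x s')); rewrite [X in next _ X]nx_px next_prev // eqxx.
Qed.

Lemma sum_traverses_cycle (R : nmodType) C s (G : {ffun 'I_n -> 'I_n} -> R) :
  cyc_seq F C s -> \sum_(f | traverses C f) G f = G (next_ffun s) + G (prev_ffun s).
Proof.
move=> Cs; rewrite (bigD1 (next_ffun s)) ?traverses_next //=; congr (_ + _).
apply: big_pred1 => f /=; apply/andP/eqP => [[Cf fn] | ->].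
  by case: (traverses_cyc Cs Cf) => // fE; rewrite fE eqxx in fn.
by split; [apply: traverses_prev Cs | rewrite eq_sym; apply: next_ffun_neq_prev Cs].
Qed.

Definition comp_family := {ffun {set 'I_n} -> {ffun 'I_n -> 'I_n}}.
Implicit Types (g : comp_family) (p : 'S_n).

Definition traversal_family g : bool :=
  [forall C, if C \in comps F then traverses C (g C) else g C == [ffun x => x]].

Definition restrict_comps p : comp_family :=
  [ffun C => if C \in comps F then [ffun x => if x \in C then p x else x]
             else [ffun x => x]].

Definition glue_fun g x := if x \in Vset F then g (comp_of x) x else x.

(* [insubd] only falls back to the identity when [glue_fun g] is not injective. *)
Definition glue g : 'S_n := insubd (1%g : 'S_n) [ffun x => glue_fun g x].

Lemma traversal_familyP g :
  reflect ({in comps F, forall C, traverses C (g C)} /\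
           {in [predC comps F], forall C, g C = [ffun x => x]})
          (traversal_family g).
Proof.
apply: (iffP forallP) => [gF | [gF gnF] C].
  by split=> C CF; move: (gF C); rewrite ?CF // (negbTE CF) => /eqP.
by case: ifPn => CF; [apply: gF | apply/eqP/gnF].
Qed.

Lemma glue_fun_comp_of g x : traversal_family g -> x \in Vset F ->
  glue_fun g x \in comp_of x.
Proof.
case/traversal_familyP => gF _ xV; rewrite /glue_fun xV.
by case/andP: (traverses_in (gF _ (comp_of_comps xV)) (comp_of_id x)).
Qed.

Lemma glue_fun_inj g : traversal_family g -> injective (glue_fun g).
Proof.
move=> gF x y; have glueV z : z \in Vset F -> glue_fun g z \in Vset F.
  by move=> zV; apply: comp_of_Vset zV (glue_fun_comp_of gF zV).
have [xV | xV] := boolP (x \in Vset F); have [yV | yV] := boolP (y \in Vset F).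
- move=> gxy; have Cxy : comp_of x = comp_of y.
    by rewrite -(comp_of_eq (glue_fun_comp_of gF xV)) gxy (comp_of_eq (glue_fun_comp_of gF yV)).
  case/traversal_familyP: gF => gF _; case/traversesP: (gF _ (comp_of_comps xV)) => gi _ _.
  by apply: gi; move: gxy; rewrite /glue_fun xV yV Cxy.
- by move=> gxy; move: (glueV _ xV); rewrite gxy /glue_fun (negbTE yV) (negbTE yV).
- by move=> gxy; move: (glueV _ yV); rewrite -gxy /glue_fun (negbTE xV) (negbTE xV).
by rewrite /glue_fun (negbTE xV) (negbTE yV).
Qed.

Lemma glueE g : traversal_family g -> glue g =1 glue_fun g.
Proof.
move=> gF x; have gi : injectiveb [ffun x => glue_fun g x].
  by apply/injectiveP => y z; rewrite !ffunE; apply: glue_fun_inj.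
by rewrite -pvalE /glue insubdK // ffunE.
Qed.

Lemma perm_edges_glue g : traversal_family g -> perm_edges (glue g) = F.
Proof.
move=> gF; have /traversal_familyP[gC _] := gF.
apply/setP => e; apply/imsetP/idP => [[x] | eF].
  rewrite inE glueE // => gx ->.
  have xV : x \in Vset F by apply: contraR gx; rewrite /glue_fun => /negbTE->.
  case/traversesP: (gC _ (comp_of_comps xV)) => _ _ Ff.
  have := Ff x _ (comp_of_id x) (glue_fun_comp_of gF xV).
  by rewrite /glue_fun xV /sym_frel eqxx => Fx; apply: Fx.
have /eqP/cards2P[u [v [uv euv]]] := F2 eF; subst e.
have uV : u \in Vset F by rewrite inE; apply/existsP; exists v; rewrite fadj_sym.
have vC : v \in comp_of u by rewrite inE connect1.
case/traversesP: (gC _ (comp_of_comps uV)) => _ _ Ff.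
have fuv : fadj F u v := eF.
move: (Ff u v (comp_of_id u) vC); rewrite fuv => /esym/orP[] /eqP guv.
  exists u; last by rewrite glueE // /glue_fun uV -guv.
  by rewrite inE glueE // /glue_fun uV -guv eq_sym.
have vV := comp_of_Vset uV vC.
exists v; last by rewrite glueE // /glue_fun vV (comp_of_eq vC) -guv setUC.
by rewrite inE glueE // /glue_fun vV (comp_of_eq vC) -guv.
Qed.

Lemma restrict_comps_glue g : traversal_family g -> restrict_comps (glue g) = g.
Proof.
move=> gF; have /traversal_familyP[gC gnC] := gF.
apply/ffunP => C; rewrite ffunE; case: ifPn => CF; last by rewrite gnC.
apply/ffunP => x; rewrite ffunE; case: ifPn => xC.
  by rewrite glueE // /glue_fun (comps_Vset CF xC) (comps_comp_of CF xC).
by case/traversesP: (gC _ CF) => _ ->.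
Qed.

Section RestrictPerm.
Variable p : 'S_n.
Hypothesis pF : perm_edges p = F.

Lemma connect_perm x : connect (fadj F) x (p x).
Proof.
have [-> | px] := eqVneq (p x) x; first exact: connect0.
by apply: connect1; rewrite -pF fadj_perm_edges eq_sym px /sym_frel eqxx.
Qed.

Lemma comps_perm_closed C x : C \in comps F -> (p x \in C) = (x \in C).
Proof.
case/imsetP => v _ ->; rewrite !inE.
by rewrite (same_connect_r connect_sym_fadj (connect_perm x)).
Qed.

Lemma glue_fun_restrict_comps : glue_fun (restrict_comps p) =1 p.
Proof.
move=> x; rewrite /glue_fun; case: ifPn => xV.
  by rewrite ffunE comp_of_comps // ffunE comp_of_id.
by apply/esym/eqP; move: xV; rewrite -pF Vset_perm_edges inE negbK.
Qed.

Lemma restrict_comps_traversal : traversal_family (restrict_comps p).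
Proof.
apply/traversal_familyP; split => C CF; rewrite ffunE; last by rewrite (negbTE CF).
rewrite CF; apply/traversesP; split => [x y | x | x y xC yC]; rewrite ?ffunE.
- have [xC | xC] := boolP (x \in C); have [yC | yC] := boolP (y \in C) => //.
  + exact: perm_inj.
  + by move=> pxy; move: yC; rewrite -pxy comps_perm_closed ?xC.
  + by move=> pxy; move: xC; rewrite pxy comps_perm_closed ?yC.
- by move/negbTE ->.
have px : p x != x by move: (comps_Vset CF xC); rewrite -pF Vset_perm_edges inE.
rewrite -pF fadj_perm_edges /sym_frel !ffunE xC yC.
by have [<- | //] := eqVneq x y; rewrite eq_sym (negbTE px).
Qed.

Lemma glue_restrict_comps : glue (restrict_comps p) = p.
Proof.
by apply/permP => x; rewrite glueE ?restrict_comps_traversal ?glue_fun_restrict_comps.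
Qed.

End RestrictPerm.

Lemma sum_perm_edges_traversals (R : nmodType) (G : comp_family -> R) :
  \sum_(p | perm_edges p == F) G (restrict_comps p) = \sum_(g | traversal_family g) G g.
Proof.
rewrite [RHS](reindex_onto restrict_comps glue) => [|g /restrict_comps_glue //].
apply: eq_bigl => p; apply/idP/andP => [/eqP pF | [gF /eqP <-]].
  by split; [apply: restrict_comps_traversal | apply/eqP/glue_restrict_comps].
by rewrite perm_edges_glue.
Qed.

Lemma sum_perm_edges_prod (R : comNzRingType) (E : 'I_n -> 'I_n -> R) :
  \sum_(p | perm_edges p == F) \prod_(i in Vset F) E i (p i) =
  \prod_(C in comps F) \sum_(f | traverses C f) \prod_(i in C) E i (f i).
Proof.
transitivity (\sum_(p | perm_edges p == F)
    \prod_(C in comps F) \prod_(i in C) E i (restrict_comps p C i)).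
  apply: eq_bigr => p /eqP pF; rewrite prod_Vset_comps.
  by apply: eq_bigr => C CF; apply: eq_bigr => i iC; rewrite !ffunE CF ffunE iC.
rewrite (sum_perm_edges_traversals (fun g => \prod_(C in comps F) \prod_(i in C) E i (g C i))).
rewrite (big_distr_big_dep [ffun x => x]); apply: eq_bigl => g.
apply/forallP/familyP => gF C; move: (gF C);
  by rewrite -[C \in in_mem^~ _]/(C \in comps F); case: (C \in comps F).
Qed.

End Subgraph.

Lemma omega_sub_conj : omega - omega^* = 'i * sqrtC 3.
Proof.
have r3 : (sqrtC 3 : algC)^* = sqrtC 3 by apply/CrealP/ger0_real; rewrite sqrtC_ge0 ler0n.
rewrite /omega fmorph_div rmorphD rmorphM /= r3 conjCi rmorph1 conjC_nat.
by field.
Qed.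

Lemma omega_neq_real x : x \is Num.real -> omega != x.
Proof.
move=> /CrealP xr; apply/eqP => ox; move: omega_sub_conj.
rewrite ox xr subrr => /esym/eqP.
by rewrite mulf_eq0 (negbTE (@neq0Ci _)) sqrtC_eq0 pnatr_eq0.
Qed.

Lemma omega_expr2 : omega ^+ 2 = omega - 1.
Proof.
rewrite /omega; have -> : ((1 + 'i * sqrtC 3) / 2) ^+ 2 =
          (1 + 2 * 'i * sqrtC 3 + 'i ^+ 2 * sqrtC 3 ^+ 2) / 4 :> algC.
  by field.
by rewrite sqrCi sqrtCK; field.
Qed.

Lemma omega_expr3 : omega ^+ 3 = -1.
Proof. by rewrite exprS omega_expr2 mulrBr mulr1 -expr2 omega_expr2 addrAC subrr add0r. Qed.

Lemma omega_expr4 : omega ^+ 4 = - omega.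
Proof. by rewrite exprSr omega_expr3 mulN1r. Qed.

Lemma omega_expr5 : omega ^+ 5 = 1 - omega.
Proof. by rewrite exprSr omega_expr4 mulNr -expr2 omega_expr2 opprB. Qed.

Lemma omega_prim_root : 6.-primitive_root omega.
Proof.
apply/andP; split => //; apply/forallP => -[i /= i6]; rewrite unity_rootE.
have omega_real (x : algC) : x \is Num.real -> (omega == x) = false.
  by move/omega_neq_real/negbTE.
case: i i6 => [|[|[|[|[|[|i]]]]]] i6; last by [].
- by rewrite expr1 omega_real ?real1.
- by rewrite omega_expr2 subr_eq omega_real ?rpredD ?real1.
- by rewrite omega_expr3 (lt_eqF (lt_trans (@ltrN10 _) ltr01)).
- by rewrite omega_expr4 (eqr_oppLR omega) omega_real ?rpredN ?real1.
- rewrite omega_expr5 -(subr_eq0 (1 - omega)) addrAC subrr add0r (oppr_eq0 omega).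
  by rewrite omega_real ?real0.
by rewrite (exprM omega 3 2) omega_expr3 expr2 mulN1r opprK !eqxx.
Qed.

Lemma conj_omega : omega^* = 1 - omega.
Proof. by rewrite -[omega^*](subKr omega) omega_sub_conj /omega; field. Qed.

Lemma oppr_conj_omega : - omega^* = omega ^+ 2.
Proof. by rewrite conj_omega opprB omega_expr2. Qed.

Definition cycle_value (w : algC) : algC :=
  (if w == 1 then 2 else 1) * (if w == -1 then -2 else 1) *
  (if (w == - omega) || (w == - omega^*) then -1 else 1).

Lemma omega_expr_add_conj j : omega ^+ j + (omega ^+ j)^* = cycle_value (omega ^+ j).
Proof.
rewrite -(prim_expr_mod omega_prim_root j) /cycle_value.
rewrite -[in _ == 1](expr0 omega) -[in _ == -1]omega_expr3 -omega_expr4 oppr_conj_omega.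
rewrite !(eq_prim_root_expr omega_prim_root) modn_mod.
have : (j %% 6 < 6)%N by rewrite ltn_pmod.
case: (j %% 6)%N => [|[|[|[|[|[|i]]]]]] // _; rewrite !modn_small //=.
all: rewrite ?expr0 ?expr1 ?omega_expr2 ?omega_expr3 ?omega_expr4 ?omega_expr5.
all: rewrite ?rmorphN ?rmorphB /= ?conjC1 ?conj_omega; ring.
Qed.

Lemma omega_mul_conj : omega * omega^* = 1.
Proof. by rewrite conj_omega mulrBr mulr1 -expr2 omega_expr2 opprB addrC subrK. Qed.

Lemma conjC_eq (z w : algC) : (z^* == w) = (z == w^*).
Proof. by rewrite -(inj_eq (can_inj conjCK)) conjCK. Qed.

Lemma prodr_if_card (R : comNzRingType) (T : finType) (A : {set T}) (P : pred T) (c : R) :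
  \prod_(x in A) (if P x then c else 1) = c ^+ #|[set x in A | P x]|.
Proof. by rewrite -big_mkcondr -prodr_const; apply: eq_bigl => x; rewrite inE. Qed.

Section MixedGraphMatrix.
Variable n : nat.
Variables adj arc : rel 'I_n.
Hypothesis hG : mixed_graph adj arc.
Local Notation N := (Nmat adj arc).

Lemma adj_sym u v : adj u v = adj v u. Proof. by case: hG. Qed.
Lemma adj_irr u : ~~ adj u u. Proof. by case: hG. Qed.
Lemma arc_adj u v : arc u v -> adj u v. Proof. by case: hG => _ _ + _; apply. Qed.

Lemma Nmat_conj x y : N y x = (N x y)^*.
Proof.
case: hG => _ _ _ arc_asym; rewrite !mxE.
case xy: (arc x y); first by rewrite (negbTE (arc_asym _ _ xy)).
case: (arc y x); first by rewrite conjCK.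
by rewrite adj_sym; case: (adj x y); rewrite ?conjC1 ?conjC0.
Qed.

Lemma Nmat_nadj x y : ~~ adj x y -> N x y = 0.
Proof.
move=> xy; have arc_xy : arc x y = false by apply: contraNF xy => /arc_adj.
have arc_yx : arc y x = false by apply: contraNF xy => /arc_adj; rewrite adj_sym.
by rewrite mxE arc_xy arc_yx (negbTE xy).
Qed.

Lemma Nmat_diag x : N x x = 0.
Proof. exact/Nmat_nadj/adj_irr. Qed.

Lemma Nmat_omega_expr x y : adj x y -> exists j, N x y = omega ^+ j.
Proof.
move=> xy; rewrite mxE; case: (arc x y); first by exists 1%N; rewrite expr1.
case: (arc y x); first by exists 5%N; rewrite omega_expr5 conj_omega.
by rewrite xy; exists 0%N; rewrite expr0.
Qed.

Lemma Nmat_mul_conj x y : adj x y -> N x y * N y x = 1.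
Proof.
case/Nmat_omega_expr => j Nxy.
by rewrite (Nmat_conj x y) Nxy rmorphXn -exprMn omega_mul_conj expr1n.
Qed.

Lemma edgeset_card2 (F : {set {set 'I_n}}) :
  F \subset edgeset adj -> {in F, forall e : {set 'I_n}, #|e| = 2}.
Proof.
move=> /subsetP FG e /FG; rewrite inE => /existsP[u /existsP[v /andP[uv /eqP->]]].
by rewrite cards2; case: eqP uv => [-> | //]; rewrite (negbTE (adj_irr v)).
Qed.

Lemma fadj_edgeset (F : {set {set 'I_n}}) x y : F \subset edgeset adj -> fadj F x y -> adj x y.
Proof.
move=> /subsetP FG /FG; rewrite inE => /existsP[u /existsP[v /andP[uv]]].
by rewrite eq_set2 => /orP[] /andP[/eqP-> /eqP->] //; rewrite adj_sym.
Qed.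

Section ElementarySubgraph.
Variable F : {set {set 'I_n}}.
Hypotheses (FG : F \subset edgeset adj) (Fel : elementary F).
Let F2 := edgeset_card2 FG.
Implicit Types (C : {set 'I_n}) (W : pred algC).

Definition has_cycle_weight W C :=
  [exists t : (#|C|).-tuple 'I_n, cyc_seq F C t && W (cyc_weight N t)].

Lemma comps_elementary C : C \in comps F ->
  (exists u v, fadj F u v /\ C = [set u; v]) \/ (exists s, cyc_seq F C s).
Proof.
move=> CF; move/forall_inP/(_ C CF): Fel => /orP[/cards2P[x [y [_ Cxy]]] | /existsP[t Ct]];
  last by right; exists t.
left; have xC : x \in C by rewrite Cxy set21.
have := comps_Vset CF xC; rewrite inE => /existsP[w wx].
have : w \in C by rewrite -(comps_comp_of CF xC) inE connect1 // fadj_sym.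
rewrite Cxy => /set2P[] wE; first by move: wx; rewrite wE (negbTE (fadj_irr F2 x)).
by exists x, y; rewrite -wE fadj_sym.
Qed.

Lemma has_cycle_weight_edge W u v : u != v -> has_cycle_weight W [set u; v] = false.
Proof.
move=> uv; apply/existsP => -[t /andP[/and4P[_ + _ _] _]].
by rewrite size_tuple cards2 uv.
Qed.

Lemma sum_traverses_edge u v : fadj F u v ->
  \sum_(f | traverses F [set u; v] f) \prod_(i in [set u; v]) N i (f i) = 1.
Proof.
move=> uv; have u_v : u != v by apply: contraTneq uv => ->; apply: fadj_irr.
rewrite (big_pred1 _ (traverses_edge F2 uv)) big_setU1 ?inE // big_set1 pvalE tpermL tpermR.
exact/Nmat_mul_conj/(fadj_edgeset FG).
Qed.

Section CycleComponent.
Variables (C : {set 'I_n}) (s : seq 'I_n).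
Hypothesis Cs : cyc_seq F C s.

Let w := \prod_(i in C) N i (next s i).

Lemma cyc_weightE t : cyc_seq F C t -> cyc_weight N t = \prod_(i in C) N i (next t i).
Proof. by case/cyc_seqP => ut _ Ct _; rewrite /cyc_weight big_uniq //; apply: eq_bigl. Qed.

Lemma prod_prev_conj : \prod_(i in C) N i (prev s i) = w^*.
Proof.
case/cyc_seqP: Cs => us _ Ct _.
rewrite rmorph_prod (reindex_inj (can_inj (prev_next us))) /=.
by apply: eq_big => [i | i _]; rewrite ?Ct ?mem_next // prev_next // -Nmat_conj.
Qed.

Lemma cycle_weight_omega_expr : exists j, w = omega ^+ j.
Proof.
apply: (big_ind (fun z => exists j, z = omega ^+ j)) => [| _ _ [j ->] [l ->] | i iC].
- by exists 0%N; rewrite expr0.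
- by exists (j + l)%N; rewrite exprD.
case/cyc_seqP: Cs => _ _ Ct Ff; apply/Nmat_omega_expr/(fadj_edgeset FG).
by rewrite Ff ?Ct ?mem_next -?Ct // /sym_frel eqxx.
Qed.

(* The two traversals of a cycle have conjugate weights, so a test invariant
   under conjugation does not depend on the traversal. *)
Lemma has_cycle_weightE W : (forall z, W z^* = W z) -> has_cycle_weight W C = W w.
Proof.
move=> Wconj; apply/existsP/idP => [[t /andP[Ct]] | Ww]; last first.
  have s_size : size s == #|C|.
    by case/cyc_seqP: Cs => us _ Cs' _; rewrite -(card_uniqP us); apply/eqP/eq_card.
  by exists (Tuple s_size); rewrite Cs cyc_weightE.
rewrite cyc_weightE //; case: (traverses_cyc F2 Cs (traverses_next Ct)) => /ffunP tE.
  have {}tE i : next t i = next s i by rewrite -!next_ffunE tE.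
  by rewrite (eq_bigr _ (fun i _ => congr1 (N i) (tE i))).
have {}tE i : next t i = prev s i by rewrite -next_ffunE -prev_ffunE tE.
by rewrite (eq_bigr _ (fun i _ => congr1 (N i) (tE i))) prod_prev_conj Wconj.
Qed.

Lemma sum_traverses_cycle_value :
  \sum_(f | traverses F C f) \prod_(i in C) N i (f i) = cycle_value w.
Proof.
have [j wE] := cycle_weight_omega_expr.
have -> : cycle_value w = w + w^* by rewrite wE omega_expr_add_conj.
rewrite (sum_traverses_cycle F2 _ Cs) -prod_prev_conj.
by congr (_ + _); apply: eq_bigr => i _; rewrite ?next_ffunE ?prev_ffunE.
Qed.

End CycleComponent.

Lemma sum_traverses_comps C : C \in comps F ->
  \sum_(f | traverses F C f) \prod_(i in C) N i (f i) =
  (if has_cycle_weight (fun w => w == 1) C then 2 else 1) *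
  (if has_cycle_weight (fun w => w == -1) C then -2 else 1) *
  (if has_cycle_weight (fun w => (w == - omega) || (w == - omega^*)) C then -1 else 1).
Proof.
case/comps_elementary => [[u [v [uv ->]]] | [s Cs]].
  have u_v : u != v by apply: contraTneq uv => ->; apply: fadj_irr.
  by rewrite sum_traverses_edge // !has_cycle_weight_edge // !mulr1.
rewrite (sum_traverses_cycle_value Cs) !(has_cycle_weightE Cs) // => z.
all: by rewrite !conjC_eq ?rmorphN /= ?conjC1 ?conjCK 1?orbC.
Qed.

Lemma sum_perm_edges_elementary k : #|Vset F| = k ->
  \sum_(s : 'S_n | perm_edges s == F) (-1) ^+ s * (-1) ^+ k * \prod_(i in moved s) N i (s i) =
  (-1) ^+ (#|comps F| + l_n N F + l_sn N F) * 2 ^+ (l_p N F + l_n N F).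
Proof.
move=> Vk; transitivity ((-1) ^+ #|comps F| *
    \sum_(s : 'S_n | perm_edges s == F) \prod_(i in Vset F) N i (s i)).
  rewrite mulr_sumr; apply: eq_bigr => s /eqP sF.
  rewrite sign_perm_edges -(Vset_perm_edges s) sF Vk; congr (_ * _).
  by rewrite exprD mulrAC -expr2 sqrr_sign mul1r.
rewrite sum_perm_edges_prod //; under eq_bigr => C /sum_traverses_comps -> do [].
have regroup t p m q : (-1) ^+ t * (2 ^+ p * (-2) ^+ m * (-1) ^+ q) =
                       (-1) ^+ (t + m + q) * 2 ^+ (p + m) :> algC.
  by rewrite -[-2](mulN1r 2) exprMn !exprD; ring.
by rewrite !big_split /= !prodr_if_card regroup.
Qed.

End ElementarySubgraph.

Lemma sum_moved_perm_edges (k : nat) :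
  \sum_(s : 'S_n | #|moved s| == k) (-1) ^+ s * (-1) ^+ k * \prod_(i in moved s) N i (s i) =
  \sum_(F : {set {set 'I_n}} | [&& F \subset edgeset adj, elementary F & #|Vset F| == k])
     \sum_(s : 'S_n | perm_edges s == F)
        (-1) ^+ s * (-1) ^+ k * \prod_(i in moved s) N i (s i).
Proof.
rewrite (bigID (fun s => perm_edges s \subset edgeset adj)) /= [X in _ + X]big1 ?addr0.
  rewrite (partition_big (@perm_edges n) (fun F => [&& F \subset edgeset adj, elementary F
                                                      & #|Vset F| == k])) /= => [|s].
    apply: eq_bigr => F /and3P[FG _ /eqP Fk]; apply: eq_bigl => s.
    apply/andP/eqP => [[_ /eqP //] | sF].
    by rewrite -(Vset_perm_edges s) sF Fk FG eqxx.
  by case/andP=> /eqP sk sG; rewrite sG elementary_perm_edges Vset_perm_edges sk eqxx.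
move=> s /andP[_ /subsetPn[_ /imsetP[i si ->] not_edge]].
have i_si : ~~ adj i (s i).
  apply: contra not_edge => adj_i; rewrite inE.
  by apply/existsP; exists i; apply/existsP; exists (s i); rewrite adj_i eqxx.
by rewrite (bigD1 i si) /= (Nmat_nadj i_si) mul0r mulr0.
Qed.

End MixedGraphMatrix.

Lemma signr_int_sub (R : unitRingType) (a b : nat) : (-1 : R) ^ (a%:Z - b%:Z) = (-1) ^+ (a + b).
Proof. by rewrite exprzDr ?unitrN1 // -exprnP -exprnN invr_sign exprD. Qed.

Theorem theorem2p6 (n : nat) (adj arc : rel 'I_n) (k : nat) :
  mixed_graph adj arc -> (1 <= k <= n)%N ->
  (char_poly (Nmat adj arc))`_(n - k) =
  \sum_(F : {set {set 'I_n}} | [&& F \subset edgeset adj, elementary F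
                                 & #|Vset F| == k])
     (-1) ^ (- (k%:Z) + rk F + (l_sn (Nmat adj arc) F)%:Z
             + (l_n (Nmat adj arc) F)%:Z)
     * 2 ^+ (l_p (Nmat adj arc) F + l_n (Nmat adj arc) F).
Proof.
move=> hG /andP[_ kn].
rewrite coef_char_poly_zero_diag // ?(sum_moved_perm_edges hG); last exact: Nmat_diag.
apply: eq_bigr => F /and3P[FG Fel /eqP Fk].
rewrite (sum_perm_edges_elementary hG FG Fel Fk) /rk Fk.
set t := #|comps F|; set ln := l_n _ F; set lsn := l_sn _ F.
have -> : - k%:Z + (k%:Z - t%:Z) + lsn%:Z + ln%:Z = (ln + lsn)%N%:Z - t%:Z.
  by rewrite PoszD; ring.
by rewrite signr_int_sub [(_ + t)%N]addnC addnA.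
Qed.
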